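(* Let $C$ be a Cantor fan and let $L\subseteq C$ be a subcontinuum of $C$ that is a Lelek fan. Then $L$ is nowhere dense in $C$, i.e. $\mathrm{Int}_C(\mathrm{Cl}_C(L))=\emptyset$.
   Context: A continuum is a nonempty compact connected metric space. A dendroid is an arcwise connected, hereditarily unicoherent continuum. A point $x$ of a dendroid $X$ is a ramification point if $x$ is the top (the branch point) of some simple triod in $X$. A fan is a dendroid with at most one ramification point; this point, if it exists, is called the top of the fan. For a fan $X$, a point $x$ is an end point of $X$ if $x$ is an end point of every arc in $X$ containing $x$; $E(X)$ denotes the set of end points of $X$. A fan $X$ with top $v$ is smooth if for every $x\in X$ and every sequence $x_n\to x$ in $X$, the arcs from $v$ to $x_n$ converge (in the Hausdorff metric) to the arc from $v$ to $x$. A Lelek fan is a smooth fan $X$ with $\mathrm{Cl}(E(X))=X$. A Cantor fan is a continuum homeomorphic to $\bigcup_{c\in C}A_c\subseteq\mathbb R^2$, where $C\subseteq[0,1]$ is the Cantor middle-third set and $A_c$ is the straight segment from $(\tfrac12,0)$ to $(c,1)$. *)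

From HB Require Import structures.
From mathcomp Require Import all_boot all_order all_algebra.
From mathcomp Require Import all_classical all_reals all_analysis.
Set Implicit Arguments. Unset Strict Implicit. Unset Printing Implicit Defensive.
Import Order.TTheory GRing.Theory Num.Theory.
Import numFieldNormedType.Exports.
Local Open Scope classical_set_scope.
Local Open Scope ring_scope.

Section Defs.
Variable R : realType.

Definition unit_interval : set R := [set t | 0 <= t <= 1].

Definition homeomorphic {T U : topologicalType} (A : set T) (B : set U) : Prop :=
  exists (f : T -> U) (g : U -> T),
    [/\ (forall x, A x -> B (f x)), (forall y, B y -> A (g y)),
        (forall x, A x -> g (f x) = x) & (forall y, B y -> f (g y) = y)] /\
    {within A, continuous f} /\ {within B, continuous g}.

Definition arc_between {T : topologicalType} (A : set T) (p q : T) : Prop :=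
  exists (h : R -> T) (g : T -> R),
    [/\ (forall t, unit_interval t -> A (h t)), (forall y, A y -> unit_interval (g y)),
        (forall t, unit_interval t -> g (h t) = t) & (forall y, A y -> h (g y) = y)] /\
    [/\ {within unit_interval, continuous h}, {within A, continuous g},
        h 0 = p & h 1 = q].

Definition is_arc {T : topologicalType} (A : set T) : Prop :=
  exists p q, arc_between A p q.

Definition continuum {T : pseudoMetricType R} (X : set T) : Prop :=
  X !=set0 /\ compact X /\ connected X.

Definition arcwise_connected {T : topologicalType} (X : set T) : Prop :=
  forall x y, X x -> X y -> x <> y -> exists A, A `<=` X /\ arc_between A x y.

Definition hereditarily_unicoherent {T : pseudoMetricType R} (X : set T) : Prop :=
  forall A B : set T, A `<=` X -> B `<=` X -> continuum A -> continuum B ->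
    connected (A `&` B).

Definition dendroid {T : pseudoMetricType R} (X : set T) : Prop :=
  [/\ continuum X, arcwise_connected X & hereditarily_unicoherent X].

Definition simple_triod {T : topologicalType} (Y : set T) (v : T) : Prop :=
  exists (A1 A2 A3 : set T) (x1 x2 x3 : T),
    [/\ arc_between A1 v x1, arc_between A2 v x2 & arc_between A3 v x3] /\
    [/\ A1 `&` A2 = [set v], A1 `&` A3 = [set v], A2 `&` A3 = [set v]
      & Y = A1 `|` A2 `|` A3].

Definition ramification_point {T : topologicalType} (X : set T) (x : T) : Prop :=
  exists Y, Y `<=` X /\ simple_triod Y x.

Definition fan {T : pseudoMetricType R} (X : set T) : Prop :=
  dendroid X /\
  forall x y, ramification_point X x -> ramification_point X y -> x = y.

Definition end_point {T : topologicalType} (X : set T) (x : T) : Prop :=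
  X x /\ forall A, A `<=` X -> is_arc A -> A x -> exists q, arc_between A x q.

Definition end_points {T : topologicalType} (X : set T) : set T :=
  [set x | end_point X x].

Definition arc_in_from_to {T : topologicalType} (X : set T) (v x : T) (A : set T) :=
  A `<=` X /\ (if pselect (x = v) then A = [set v] else arc_between A v x).

Definition eps_nbhd {T : pseudoMetricType R} (B : set T) (e : R) : set T :=
  [set y | exists2 b, B b & ball b e y].

Definition hausdorff_cvg {T : pseudoMetricType R} (A : nat -> set T) (B : set T) :=
  forall e : R, 0 < e ->
    \forall n \near \oo, A n `<=` eps_nbhd B e /\ B `<=` eps_nbhd (A n) e.

Definition smooth_fan_top {T : pseudoMetricType R} (X : set T) (v : T) : Prop :=
  [/\ fan X, ramification_point X v &
    forall (x : T) (xn : nat -> T) (An : nat -> set T) (B : set T),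
      X x -> (forall n, X (xn n)) -> xn @ \oo --> x ->
      (forall n, arc_in_from_to X v (xn n) (An n)) -> arc_in_from_to X v x B ->
      hausdorff_cvg An B].

Definition smooth_fan {T : pseudoMetricType R} (X : set T) : Prop :=
  exists v, smooth_fan_top X v.

Definition rel_closure {T : topologicalType} (X A : set T) : set T :=
  closure A `&` X.

Definition rel_interior {T : topologicalType} (X A : set T) : set T :=
  [set x | exists O : set T, [/\ open O, O x, X x & O `&` X `<=` A]].

Definition lelek_fan {T : pseudoMetricType R} (X : set T) : Prop :=
  smooth_fan X /\ rel_closure X (end_points X) = X.

Definition cantor_middle_third : set R :=
  [set x | exists a : nat -> bool,
     (fun n => \sum_(0 <= k < n) (a k)%:R * 2 / 3 ^+ k.+1) @ \oo --> x].

(* straight segment from (1/2,0) to (c,1) *)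
Definition fan_segment (c : R) : set (R * R) :=
  [set p | exists2 t, unit_interval t & p = ((1 - t) * 2^-1 + t * c, t)].

Definition standard_cantor_fan : set (R * R) :=
  \bigcup_(c in cantor_middle_third) fan_segment c.

Definition cantor_fan {T : pseudoMetricType R} (X : set T) : Prop :=
  continuum X /\ homeomorphic X standard_cantor_fan.

End Defs.

(* Suppose a relatively open set W of C lies in the closure of L.  Since C
   embeds in the plane, the compact set L is closed in C, so W meets C only in
   points of L.  The points of C lying on the open part of a segment of the
   fan (neither the top nor a tip) are dense and relatively open in C, and the
   end points of L are dense in L; hence some end point e of L lies in W on the
   open part of a segment.  A short piece of that segment around e is an arc
   contained in W, hence in L, with e in its interior.  This contradicts e being
   an end point of L, because an injective continuous map of [0,1] into [0,1]
   cannot attain its minimum at an interior point. *)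

From HB Require Import structures.
From mathcomp Require Import all_boot all_order all_algebra.
From mathcomp Require Import all_classical all_reals all_analysis.
From mathcomp Require Import ring lra.
Import Order.TTheory GRing.Theory Num.Theory.
Import numFieldNormedType.Exports.
Local Open Scope classical_set_scope.
Local Open Scope ring_scope.

Section pseudometric_continuity.
Context {R : realType}.

Lemma within_continuous_ballP {U V : pseudoMetricType R} (A : set U) (f : U -> V) :
  {within A, continuous f} <->
  forall x, A x -> forall e : R, 0 < e ->
    exists2 d : R, 0 < d & forall y, A y -> ball x d y -> ball (f x) e (f y).
Proof.
split=> [/subspace_continuousP cf x Ax e e0 | cf].
  have /nbhs_ballP[d d0 fB] := cf x Ax _ (nbhsx_ballx (f x) e e0).
  by exists d => // y Ay xy; exact: fB.
apply/subspace_continuousP => x Ax B /nbhs_ballP[e e0 eB].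
have [d d0 fB] := cf x Ax e e0.
by apply/nbhs_ballP; exists d => // y xy Ay; exact/eB/fB.
Qed.

Lemma within_continuous_comp_within {U V W : pseudoMetricType R}
    (A : set U) (B : set V) (f : U -> V) (g : V -> W) :
  (forall x, A x -> B (f x)) -> {within A, continuous f} ->
  {within B, continuous g} -> {within A, continuous (g \o f)}.
Proof.
move=> fAB /within_continuous_ballP cf /within_continuous_ballP cg.
apply/within_continuous_ballP => x Ax e e0.
have [d d0 gB] := cg _ (fAB x Ax) e e0.
have [d' d'0 fB] := cf x Ax d d0.
by exists d' => // y Ay xy; apply: gB; [exact: fAB | exact: fB].
Qed.

Lemma rel_closure_compact_sub {T U : pseudoMetricType R}
    {C L : set T} {f : T -> U} :
  hausdorff_space U -> {within C, continuous f} -> {in C &, injective f} ->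
  L `<=` C -> compact L -> rel_closure C L `<=` L.
Proof.
move=> hU cf finj LC cL c [clLc Cc].
have fL_closed : closed (f @` L).
  apply: compact_closed hU _; apply: continuous_compact cL.
  exact: continuous_subspaceW LC cf.
have : closure (f @` L) (f c).
  move=> B /nbhs_ballP[e e0 eB].
  have [d d0 fB] := (within_continuous_ballP C f).1 cf c Cc e e0.
  have [l [Ll cl]] := clLc _ (nbhsx_ballx c d d0).
  by exists (f l); split; [exact: imageP | apply/eB/fB => //; exact: LC].
rewrite -(closure_id _).1 // => -[l Ll /finj flc].
by rewrite -flc ?inE //; exact: LC.
Qed.

End pseudometric_continuity.

Lemma itv_continuous_inj_no_interior_min {R : realType} (phi : R -> R) (a b u : R) :
  a < u < b -> {within `[a, b], continuous phi} -> {in `[a, b] &, injective phi} ->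
  ~ (forall v, v \in `[a, b] -> phi u <= phi v).
Proof.
move=> /andP[au ub] cphi iphi umin.
have [aI bI uI] : [/\ a \in `[a, b], b \in `[a, b] & u \in `[a, b]].
  by rewrite !in_itv /= !lexx (ltW au) (ltW ub) (ltW (lt_trans au ub)).
have [incr | decr] := itv_continuous_inj_mono cphi iphi.
  by have := umin a aI; rewrite leNgt incr.
by have := umin b bI; rewrite leNgt decr.
Qed.

Section arcs.
Context {R : realType} {T : pseudoMetricType R}.
Variables (h : R -> T) (k : T -> R).
Hypotheses (ch : {within @unit_interval R, continuous h})
  (ck : {within h @` @unit_interval R, continuous k})
  (kh : forall t, @unit_interval R t -> k (h t) = t).

Lemma arc_between_image : arc_between R (h @` @unit_interval R) (h 0) (h 1).
Proof.
exists h, k; split; [split|] => //.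
all: by move=> _ [t tI <-]; rewrite kh.
Qed.

Lemma arc_image_interior_not_end_point (X : set T) (u : R) :
  h @` @unit_interval R `<=` X -> 0 < u < 1 -> ~ end_point R X (h u).
Proof.
move=> hX u01 [_ endX].
have uI : unit_interval u.
  by move: u01 => /andP[u0 u1]; apply/andP; split; exact: ltW.
have [q [h' [k' [[_ k'I k'h' h'k'] [_ ck' h'0 _]]]]] :=
  endX _ hX (ex_intro _ _ (ex_intro _ _ arc_between_image)) (imageP h uI).
(* [k' \o h] is injective and nonnegative on [0, 1] and vanishes at [u]. *)
apply: (@itv_continuous_inj_no_interior_min _ (k' \o h) 0 1 u u01).
- rewrite set_itvcc; apply: within_continuous_comp_within ch ck' => t tI.
  exact: imageP.
- move=> s t; rewrite !in_itv /= => sI tI /(congr1 h').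
  by rewrite !h'k' ?(imageP h sI) ?(imageP h tI) // => /(congr1 k); rewrite !kh.
- move=> v; rewrite in_itv /= => vI.
  have /andP[k'hv0 _] : 0 <= k' (h v) <= 1 := k'I _ (imageP h vI).
  by rewrite /= -h'0 k'h' //; apply/andP; rewrite ler01 lexx.
Qed.

End arcs.

Section standard_cantor_fan.
Context {R : realType}.

Definition fan_point (c t : R) : R * R := ((1 - t) * 2^-1 + t * c, t).

Lemma fan_point_standard c t :
  cantor_middle_third c -> unit_interval t -> standard_cantor_fan (fan_point c t).
Proof. by move=> Kc tI; exists c => //; exists t. Qed.

Lemma ball_fan_point c t s d :
  `|s - t| * (`|c| + 1) < d -> ball (fan_point c t) d (fan_point c s).
Proof.
move=> std; have c0 := normr_ge0 c; have st0 := normr_ge0 (s - t).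
split; rewrite -ball_normE /=; apply: le_lt_trans std; last first.
  by rewrite distrC ler_peMr // lerDr.
have -> : (1 - t) * 2^-1 + t * c - ((1 - s) * 2^-1 + s * c) = (s - t) * (2^-1 - c)
  by ring.
rewrite normrM ler_wpM2l //; apply: (le_trans (ler_normB _ _)).
by rewrite addrC lerD2l ger0_norm; lra.
Qed.

Lemma fan_point_continuous (c : R) : continuous (fan_point c).
Proof.
move=> t B /nbhs_ballP[e e0 eB]; have c1 : 0 < `|c| + 1 by rewrite ltr_wpDl.
apply/nbhs_ballP; exists (e / (`|c| + 1)) => [|s ts]; first exact: divr_gt0.
apply/eB/ball_fan_point; rewrite -ltr_pdivlMr // distrC.
by rewrite -ball_normE in ts.
Qed.

End standard_cantor_fan.

Definition homeomorphism_on {T U : topologicalType} (A : set T) (B : set U)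
    (f : T -> U) (g : U -> T) : Prop :=
  [/\ (forall x, A x -> B (f x)), (forall y, B y -> A (g y)),
      (forall x, A x -> g (f x) = x) & (forall y, B y -> f (g y) = y)] /\
  {within A, continuous f} /\ {within B, continuous g}.

(* [(f y).2] is the height of [y] on its segment of the fan: 0 at the top,
   1 at the tip.  Points of height in (0, 1) are the "inner points". *)
Section cantor_fan_embedding.
Context {R : realType} {T : pseudoMetricType R}.
Context {C : set T} {f : T -> R * R} {g : R * R -> T}.
Local Notation S := (@standard_cantor_fan R).
Hypothesis fg_hom : homeomorphism_on C S f g.

Lemma fan_coordinates x : C x ->
  exists2 c, cantor_middle_third c &
    f x = fan_point c (f x).2 /\ unit_interval (f x).2.
Proof.
case: fg_hom => -[fC _ _ _] _ Cx.
by have [c Kc [t tI ->]] := fC x Cx; exists c.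
Qed.

Lemma inner_points_dense {x : T} {U : set T} : C x -> nbhs x U ->
  exists y, [/\ C y, U y & 0 < (f y).2 < 1].
Proof.
case: fg_hom => -[fC gS gf fg] [_ cg] Cx /nbhs_ballP[r r0 rU].
have [c Kc [fx /andP[t0 t1]]] := fan_coordinates x Cx.
move: fx t0 t1; set t := (f x).2 => fx t0 t1.
have [d d0 gB] := (within_continuous_ballP _ g).1 cg _ (fC x Cx) r r0.
have c1 : 0 < `|c| + 1 by rewrite ltr_wpDl.
pose lam := Num.min 1 (d / (`|c| + 1)).
have [lam0 lam1 lamd] : [/\ 0 < lam, lam <= 1 & lam <= d / (`|c| + 1)].
  by split; rewrite ?lt_min ?ge_min ?lexx ?ltr01 ?divr_gt0 ?orbT.
pose s := t + lam * (2^-1 - t).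
have s01 : 0 < s < 1 by apply/andP; split; rewrite /s; nra.
have sI : unit_interval s by case/andP: s01 => *; apply/andP; split; exact: ltW.
exists (g (fan_point c s)); split.
- exact/gS/fan_point_standard.
- apply/rU; rewrite -(gf x Cx); apply: gB; first exact: fan_point_standard.
  rewrite fx; apply: ball_fan_point; rewrite -ltr_pdivlMr //.
  by apply: lt_le_trans lamd; rewrite ltr_norml; apply/andP; split; rewrite /s; nra.
- by rewrite fg //; exact: fan_point_standard.
Qed.

Lemma inner_points_open {y : T} : C y -> 0 < (f y).2 < 1 ->
  \forall z \near y, C z -> 0 < (f z).2 < 1.
Proof.
case: fg_hom => _ [cf _] Cy /andP[t0 t1].
have e0 : 0 < Num.min (f y).2 (1 - (f y).2) by rewrite lt_min t0 subr_gt0.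
have [d d0 fB] := (within_continuous_ballP _ f).1 cf y Cy _ e0.
apply/nbhs_ballP; exists d => // z yz Cz.
have [_ /=] := fB z Cz yz; rewrite -ball_normE /= lt_min => /andP[].
by rewrite !ltr_norml => /andP[? ?] /andP[? ?]; apply/andP; split; lra.
Qed.

Definition segment_path (c a b : R) : R -> T :=
  g \o fan_point c \o (fun u => a + (b - a) * u).

Definition segment_coord (a b : R) : T -> R :=
  (fun s => (s - a) / (b - a)) \o snd \o f.

Section segment.
Context {c a b : R}.
Hypotheses (Kc : cantor_middle_third c) (a0 : 0 <= a) (ab : a < b) (b1 : b <= 1).

Lemma segment_point_standard u :
  unit_interval u -> S (fan_point c (a + (b - a) * u)).
Proof.
move=> /andP[u0 u1]; apply: fan_point_standard => //.
have ba : 0 <= b - a by rewrite subr_ge0 ltW.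
have u'0 : 0 <= 1 - u by rewrite subr_ge0.
apply/andP; split; first by rewrite addr_ge0 // mulr_ge0.
have -> : a + (b - a) * u = b - (b - a) * (1 - u) by ring.
by apply: (le_trans _ b1); rewrite gerBl mulr_ge0.
Qed.

Lemma segment_path_in u : unit_interval u -> C (segment_path c a b u).
Proof. by case: fg_hom => -[_ gS _ _] _ /segment_point_standard /gS. Qed.

Lemma segment_path_continuous :
  {within @unit_interval R, continuous (segment_path c a b)}.
Proof.
case: fg_hom => _ [_ cg]; apply: within_continuous_comp_within cg.
  exact: segment_point_standard.
apply: continuous_subspaceT => u.
apply: continuous_comp; last exact: fan_point_continuous.
by apply: cvgD; [exact: cvg_cst | apply: cvgMl_tmp; exact: cvg_id].
Qed.

Lemma segment_coordK u :
  unit_interval u -> segment_coord a b (segment_path c a b u) = u.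
Proof.
case: fg_hom => -[_ _ _ fg] _ uI; rewrite /segment_coord /segment_path /=.
rewrite fg; last exact: segment_point_standard.
by rewrite /=; field; rewrite subr_eq0 gt_eqF.
Qed.

End segment.

Lemma segment_coord_continuous (a b : R) (A : set T) :
  A `<=` C -> {within A, continuous (segment_coord a b)}.
Proof.
case: fg_hom => _ [cf _] AC; apply: within_continuous_comp.
  move=> w _; apply: continuous_comp; first exact: cvg_snd.
  by apply: cvgMr_tmp; apply: cvgB; [exact: cvg_id | exact: cvg_cst].
exact: continuous_subspaceW cf.
Qed.

Lemma inner_point_not_end_point {X : set T} {y : T} : C y -> 0 < (f y).2 < 1 ->
  (\forall z \near y, C z -> X z) -> ~ end_point R X y.
Proof.
case: fg_hom => -[fC _ gf _] [_ cg] Cy t01 /nbhs_ballP[r r0 rX].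
have [c Kc [fy _]] := fan_coordinates y Cy.
move: fy t01; set t := (f y).2 => fy /andP[t0 t1].
have [d d0 gB] := (within_continuous_ballP _ g).1 cg _ (fC y Cy) r r0.
have c1 : 0 < `|c| + 1 by rewrite ltr_wpDl.
pose m := Num.min (Num.min t (1 - t)) (d / (`|c| + 1)).
have m0 : 0 < m by rewrite !lt_min t0 subr_gt0 t1 divr_gt0.
have [mt m1t md] : [/\ m <= t, m <= 1 - t & m <= d / (`|c| + 1)].
  by split; rewrite !ge_min lexx ?orbT.
pose sig := m / 2.
have [a0 ab b1] : [/\ 0 <= t - sig, t - sig < t + sig & t + sig <= 1].
  by split; rewrite /sig; lra.
pose h := segment_path c (t - sig) (t + sig).
have y_mid : h 2^-1 = y.
  rewrite /h /segment_path /= -[in RHS](gf y Cy) fy.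
  by congr (g (fan_point c _)); field.
have hC := segment_path_in Kc a0 ab b1.
rewrite -y_mid.
apply: (@arc_image_interior_not_end_point _ _ h (segment_coord (t - sig) (t + sig))).
- exact: segment_path_continuous.
- by apply: segment_coord_continuous => _ [u /hC ? <-].
- exact: segment_coordK.
- move=> _ [u uI <-]; apply: rX; last exact: hC.
  rewrite -(gf y Cy); apply: gB; first exact: segment_point_standard.
  rewrite fy; apply: ball_fan_point; rewrite -ltr_pdivlMr //.
  apply: le_lt_trans (_ : sig < _); last by rewrite /sig; lra.
  by move: uI => /andP[u0 u1]; rewrite ler_norml; apply/andP; split; nra.
- by apply/andP; split; [rewrite invr_gt0 | rewrite invf_lt1]; rewrite ?ltr0n ?ltr1n.
Qed.

End cantor_fan_embedding.

Theorem mainTheorem3 (R : realType) (T : pseudoMetricType R) (C L : set T) :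
  cantor_fan C -> L `<=` C -> continuum L -> lelek_fan L ->
  rel_interior C (rel_closure C L) = set0.
Proof.
move=> [_ [f [g hom]]] LC [_ [cL _]] [_ denseE].
apply/seteqP; split => [x [W [oW Wx Cx WclL]] | //].
have finj : {in C &, injective f}.
  apply: (can_in_inj (g := g)) => z /set_mem.
  by case: hom => -[_ _ gf _] _; exact: gf.
have WL z : W z -> C z -> L z.
  move=> Wz Cz; apply: (rel_closure_compact_sub (@norm_hausdorff _ _) hom.2.1 finj LC cL).
  exact: WclL.
have [x1 [Cx1 Wx1 x1_inner]] :=
  inner_points_dense hom Cx (open_nbhs_nbhs (conj oW Wx)).
have [clE _] : rel_closure L (end_points R L) x1 by rewrite denseE; exact: WL.
have [e [Ee [We e_inner]]] :=
  clE _ (filterI (open_nbhs_nbhs (conj oW Wx1))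
                 (inner_points_open hom Cx1 x1_inner)).
have Ce : C e := LC e Ee.1.
apply: (inner_point_not_end_point hom Ce (e_inner Ce)) Ee.
by apply: filterS (open_nbhs_nbhs (conj oW We)) => z Wz /(WL z Wz).
Qed.
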